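(* Let $N>0$, $\beta>0$, $0<\rho<1$, $\sigma>0$, $\gamma>0$ and $0\le\pi_1\le\pi_2\le 1$ be constants, and let $\Delta_1,\Delta_2:[0,\infty)\to[0,\infty)$ be continuous with $\Delta_i(t)\to0$ as $t\to+\infty$ ($i=1,2$). Write $q(t)=\Delta_1(t)\pi_1+\Delta_2(t)(\pi_2-\pi_1)$ and consider $$S'=-\tfrac{\beta}{N}S(1-\rho)I-\tfrac{S}{N}q(t),\quad E'=\tfrac{\beta}{N}S(1-\rho)I-\sigma E,\quad I'=\sigma E-\gamma I,\quad R'=\gamma I,\quad V'=\tfrac{S}{N}q(t),$$ with initial data $S_0,E_0,I_0,R_0,V_0\ge 0$ satisfying $S_0+E_0+I_0+R_0+V_0=N$. Then the solution $(S,E,I,R,V)(t)$ converges as $t\to+\infty$ to a fixed point of the limit system $$S'=-\tfrac{\beta}{N}S(1-\rho)I,\quad E'=\tfrac{\beta}{N}S(1-\rho)I-\sigma E,\quad I'=\sigma E-\gamma I,\quad R'=\gamma I,\quad V'=0,$$ i.e. to a point of the form $(S_\infty,0,0,N-S_\infty-V_\infty,V_\infty)$ with $S_\infty,V_\infty\ge0$, $S_\infty+V_\infty\le N$.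
   Context: SEIR epidemic model with vaccination: $S$ susceptible, $E$ exposed, $I$ infected, $R$ removed, $V$ vaccine-immunized individuals in a population of constant size $N$; $\Delta_1,\Delta_2$ are daily numbers of first and second doses, $\pi_1,\pi_2$ immunity fractions after each dose. $R_0$ denotes the initial value of $R$. *)

From Stdlib Require Import Reals.
From Coquelicot Require Import Coquelicot.
Open Scope R_scope.

Definition vacc_rate (D1 D2 : R -> R) (pi1 pi2 t : R) : R :=
  D1 t * pi1 + D2 t * (pi2 - pi1).

Definition cont_on_nonneg (f : R -> R) : Prop :=
  forall t, 0 <= t -> filterlim f (within (fun x => 0 <= x) (locally t)) (locally (f t)).

(* Nonnegativity of S, and then of (E, I), follows from a barrier argument:
   after adding e exp(lam t) to the components, at the first time one of them
   reached 0 its derivative would be positive, which is impossible; then let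
   e -> 0.  The total population is conserved, so R and V increase and S
   decreases to limits, hence E + I converges too.  Its limit is 0 because
   E + I is the derivative of the bounded function I/sigma + (1/sigma + 1/gamma) R. *)

From Stdlib Require Import Reals Lra Classical.
From Coquelicot Require Import Coquelicot.
Open Scope R_scope.

Lemma continuity_pt_Rmin (f g : R -> R) x :
  continuity_pt f x -> continuity_pt g x ->
  continuity_pt (fun t => Rmin (f t) (g t)) x.
Proof.
  intros Hf Hg.
  apply continuity_pt_ext with
    (f := mult_real_fct (/ 2) ((f + g) - comp Rabs (f - g))%F).
  - intros t; unfold mult_real_fct, plus_fct, minus_fct, comp, Rmin.
    destruct (Rle_dec (f t) (g t)); [rewrite Rabs_left1 | rewrite Rabs_right]; lra.
  - apply continuity_pt_scal, continuity_pt_minus; [now apply continuity_pt_plus|].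
    apply continuity_pt_comp; [now apply continuity_pt_minus | apply Rcontinuity_abs].
Qed.

Lemma continuity_pt_pos_near (h : R -> R) x :
  continuity_pt h x -> 0 < h x ->
  exists d, 0 < d /\ forall y, Rabs (y - x) < d -> 0 < h y.
Proof.
  intros Hc Hx.
  destruct (Hc (h x) Hx) as [d [Hd Hnear]].
  exists d; split; [exact Hd|]. intros y Hy.
  destruct (Req_dec x y) as [<-|Hne]; [exact Hx|].
  pose proof (Hnear y (conj (conj I Hne) Hy)) as Hclose.
  apply Rabs_def2 in Hclose. simpl in Hclose. lra.
Qed.

Lemma is_derive_le0_of_left_min (u : R -> R) a tau l :
  a < tau -> is_derive u tau l -> (forall s, a < s < tau -> u tau <= u s) -> l <= 0.
Proof.
  intros Hatau Hd Hmin.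
  destruct (Rle_lt_dec l 0) as [|Hl]; [assumption|exfalso].
  apply is_derive_Reals in Hd.
  destruct (Hd (l / 2) ltac:(lra)) as [d Hq].
  set (k := - Rmin (d / 2) ((tau - a) / 2)).
  assert (Hk : - (d / 2) <= k < 0 /\ - ((tau - a) / 2) <= k).
  { pose proof (cond_pos d). pose proof (Rmin_l (d / 2) ((tau - a) / 2)).
    pose proof (Rmin_r (d / 2) ((tau - a) / 2)).
    assert (0 < Rmin (d / 2) ((tau - a) / 2)) by (apply Rmin_glb_lt; lra).
    unfold k; lra. }
  specialize (Hq k ltac:(lra) ltac:(rewrite Rabs_left; pose proof (cond_pos d); lra)).
  apply Rabs_def2 in Hq as [_ Hq].
  assert (Hu : u tau <= u (tau + k)) by (apply Hmin; lra).
  assert ((u (tau + k) - u tau) / k <= 0).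
  { unfold Rdiv. apply Rmult_le_0_l; [lra|]. left; apply Rinv_lt_0_compat; lra. }
  lra.
Qed.

Lemma first_zero (h : R -> R) T :
  (forall t, 0 < t <= T -> continuity_pt h t) ->
  (exists d, 0 < d /\ forall x, 0 <= x < d -> 0 < h x) ->
  (exists t, 0 <= t <= T /\ h t <= 0) ->
  exists tau, 0 < tau <= T /\ h tau = 0 /\ forall s, 0 <= s < tau -> 0 < h s.
Proof.
  intros Hc [d [Hd Hinit]] [t [Ht Hht]].
  set (A := fun x => 0 <= x <= t /\ forall s, 0 <= s <= x -> 0 < h s).
  assert (Hdt : d <= t) by (destruct (Rlt_le_dec t d); [specialize (Hinit t); lra | lra]).
  destruct (completeness A) as [tau [Hub Hlub]].
  - exists t. intros x [Hx _]. lra.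
  - exists 0. split; [lra|]. intros s Hs. apply Hinit. lra.
  assert (Hd2 : d / 2 <= tau).
  { apply Hub. split; [lra|]. intros s Hs. apply Hinit. lra. }
  assert (Htau_t : tau <= t) by (apply Hlub; intros x [Hx _]; lra).
  assert (Hpos : forall s, 0 <= s < tau -> 0 < h s).
  { intros s Hs. destruct (Rlt_le_dec 0 (h s)) as [|Hns]; [assumption|exfalso].
    enough (tau <= s) by lra.
    apply Hlub. intros x [Hx HAx].
    destruct (Rle_lt_dec x s) as [|Hsx]; [assumption|].
    specialize (HAx s ltac:(lra)). lra. }
  assert (Hctau : continuity_pt h tau) by (apply Hc; lra).
  exists tau. split; [lra|]. split; [|exact Hpos].
  destruct (Rtotal_order (h tau) 0) as [Hneg|[Hz|Hpos_tau]]; [exfalso| exact Hz | exfalso].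
  - destruct (continuity_pt_pos_near (fun y => - h y) tau) as [e [He Hnear]].
    + now apply continuity_pt_opp.
    + lra.
    + set (s := tau - Rmin e tau / 2).
      assert (0 < Rmin e tau) by (apply Rmin_glb_lt; lra).
      pose proof (Rmin_l e tau). pose proof (Rmin_r e tau).
      specialize (Hnear s ltac:(unfold s; rewrite Rabs_left; lra)).
      specialize (Hpos s ltac:(unfold s; lra)). lra.
  - destruct (continuity_pt_pos_near h tau Hctau Hpos_tau) as [e [He Hnear]].
    assert (Htau_lt : tau < t) by (destruct (Req_dec tau t) as [<-|]; lra).
    pose proof (Rmin_l (tau + e / 2) t). pose proof (Rmin_r (tau + e / 2) t).
    assert (tau < Rmin (tau + e / 2) t) by (apply Rmin_glb_lt; lra).
    set (x := Rmin (tau + e / 2) t) in *.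
    enough (A x) by (assert (x <= tau) by (apply Hub; assumption); lra).
    split; [lra|]. intros s Hs.
    destruct (Rlt_le_dec s tau); [apply Hpos; lra|].
    apply Hnear. rewrite Rabs_right; lra.
Qed.

Lemma is_derive_continuity_pt (f : R -> R) x l : is_derive f x l -> continuity_pt f x.
Proof.
  intros Hd. apply continuity_pt_filterlim.
  apply (ex_derive_continuous (V := R_NormedModule)). now exists l.
Qed.

Lemma pos_barrier (f g df dg : R -> R) T :
  (exists d, 0 < d /\ forall x, 0 <= x < d -> 0 < f x /\ 0 < g x) ->
  (forall t, 0 < t -> is_derive f t (df t)) ->
  (forall t, 0 < t -> is_derive g t (dg t)) ->
  (forall t, 0 < t <= T -> f t = 0 -> 0 <= g t -> 0 < df t) ->
  (forall t, 0 < t <= T -> g t = 0 -> 0 <= f t -> 0 < dg t) ->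
  forall t, 0 <= t <= T -> 0 < f t /\ 0 < g t.
Proof.
  intros [d [Hd Hinit]] Hf Hg Bf Bg t Ht.
  set (h := fun s => Rmin (f s) (g s)).
  destruct (Rlt_le_dec 0 (h t)) as [Hht|Hht]; [now apply Rmin_Rgt|exfalso].
  destruct (first_zero h T) as [tau [Htau [Hz Hpos]]].
  - intros s Hs. apply continuity_pt_Rmin;
      [apply (is_derive_continuity_pt f s (df s)), Hf
      |apply (is_derive_continuity_pt g s (dg s)), Hg]; lra.
  - exists d. split; [exact Hd|]. intros x Hx. now apply Rmin_Rgt, Hinit.
  - now exists t.
  assert (Hpos' : forall s, 0 <= s < tau -> 0 < f s /\ 0 < g s)
    by (intros s Hs; now apply Rmin_Rgt, Hpos).
  pose proof (Rmin_l (f tau) (g tau)). pose proof (Rmin_r (f tau) (g tau)).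
  unfold h in Hz.
  (* the component that vanishes at tau decreases into 0, against the barrier *)
  destruct (Rle_dec (f tau) (g tau)).
  - rewrite Rmin_left in Hz by assumption.
    assert (df tau <= 0).
    { apply (is_derive_le0_of_left_min f 0 tau); [lra | apply Hf; lra |].
      intros s Hs. destruct (Hpos' s ltac:(lra)). lra. }
    assert (0 < df tau) by (apply Bf; lra). lra.
  - rewrite Rmin_right in Hz by lra.
    assert (dg tau <= 0).
    { apply (is_derive_le0_of_left_min g 0 tau); [lra | apply Hg; lra |].
      intros s Hs. destruct (Hpos' s ltac:(lra)). lra. }
    assert (0 < dg tau) by (apply Bg; lra). lra.
Qed.

Lemma cont_on_nonneg_eps (f : R -> R) t :
  cont_on_nonneg f -> 0 <= t ->
  forall eps, 0 < eps -> exists d, 0 < d /\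
    forall x, 0 <= x -> Rabs (x - t) < d -> Rabs (f x - f t) < eps.
Proof.
  intros Hf Ht eps Heps.
  destruct (proj1 (filterlim_locally _ _) (Hf t Ht) (mkposreal eps Heps)) as [d Hd].
  exists d. split; [apply cond_pos|]. intros x Hx Hxt. now apply (Hd x).
Qed.

Lemma nonneg_of_pos_perturbation x K :
  0 < K -> (forall e, 0 < e -> 0 < x + e * K) -> 0 <= x.
Proof.
  intros HK Hpert. destruct (Rle_lt_dec 0 x) as [|Hx]; [assumption|exfalso].
  specialize (Hpert (- x / (2 * K)) ltac:(apply Rdiv_lt_0_compat; lra)).
  replace (x + - x / (2 * K) * K) with (x / 2) in Hpert by (field; lra). lra.
Qed.

(* [w] stands for the perturbation [e exp (lam t)] added to [f] and [g]. *)
Lemma nonneg_barrier (f g df dg : R -> R) T lam :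
  0 <= lam -> cont_on_nonneg f -> cont_on_nonneg g -> 0 <= f 0 -> 0 <= g 0 ->
  (forall t, 0 < t -> is_derive f t (df t)) ->
  (forall t, 0 < t -> is_derive g t (dg t)) ->
  (forall t w, 0 < t <= T -> 0 < w -> f t = - w -> - w <= g t -> 0 < df t + lam * w) ->
  (forall t w, 0 < t <= T -> 0 < w -> g t = - w -> - w <= f t -> 0 < dg t + lam * w) ->
  forall t, 0 <= t <= T -> 0 <= f t /\ 0 <= g t.
Proof.
  intros Hlam Cf Cg Hf0 Hg0 Df Dg Bf Bg t Ht.
  assert (Hpert : forall e, 0 < e ->
    0 < f t + e * exp (lam * t) /\ 0 < g t + e * exp (lam * t)).
  { intros e He.
    assert (Dpert : forall u du s, is_derive u s (du s) ->
      is_derive (fun r => u r + e * exp (lam * r)) s (du s + lam * (e * exp (lam * s)))).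
    { intros u du s Hu. apply (is_derive_plus u (fun r => e * exp (lam * r))); [exact Hu|].
      auto_derive; [exact I | ring]. }
    apply (pos_barrier (fun s => f s + e * exp (lam * s)) (fun s => g s + e * exp (lam * s))
             (fun s => df s + lam * (e * exp (lam * s)))
             (fun s => dg s + lam * (e * exp (lam * s))) T); [| | | | | lra].
    - destruct (cont_on_nonneg_eps f 0 Cf (Rle_refl 0) e He) as [d1 [Hd1 Hf]].
      destruct (cont_on_nonneg_eps g 0 Cg (Rle_refl 0) e He) as [d2 [Hd2 Hg]].
      exists (Rmin d1 d2). split; [now apply Rmin_glb_lt|]. intros x Hx.
      pose proof (Rmin_l d1 d2). pose proof (Rmin_r d1 d2).
      assert (1 <= exp (lam * x)) by (pose proof (exp_ineq1_le (lam * x)); nra).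
      assert (Hx0 : Rabs (x - 0) < d1 /\ Rabs (x - 0) < d2)
        by (rewrite Rminus_0_r, Rabs_right; lra).
      specialize (Hf x (proj1 Hx) (proj1 Hx0)). specialize (Hg x (proj1 Hx) (proj2 Hx0)).
      apply Rabs_def2 in Hf. apply Rabs_def2 in Hg. split; nra.
    - intros s Hs. now apply Dpert, Df.
    - intros s Hs. now apply Dpert, Dg.
    - intros s Hs Hz Hnn.
      apply Bf; [| apply Rmult_lt_0_compat; [|apply exp_pos] |..]; lra.
    - intros s Hs Hz Hnn.
      apply Bg; [| apply Rmult_lt_0_compat; [|apply exp_pos] |..]; lra. }
  split; apply (nonneg_of_pos_perturbation _ (exp (lam * t)) (exp_pos _)); apply Hpert.
Qed.

(* Two-sided continuity is only available after freezing [f] on [(-oo, 0]]. *)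
Lemma continuity_pt_extend0 (f : R -> R) t :
  cont_on_nonneg f -> 0 <= t -> continuity_pt (fun x => f (Rmax 0 x)) t.
Proof.
  intros Hf Ht eps Heps.
  destruct (cont_on_nonneg_eps f t Hf Ht eps Heps) as [d [Hd Hnear]].
  exists d. split; [exact Hd|]. intros x [_ Hx]. simpl in *. unfold R_dist in *.
  rewrite (Rmax_right 0 t Ht). apply Hnear; [apply Rmax_l|].
  unfold Rmax; destruct (Rle_dec 0 x); [assumption|].
  revert Hx; unfold Rabs; repeat destruct Rcase_abs; lra.
Qed.

Lemma cont_on_nonneg_bounded (f : R -> R) T :
  cont_on_nonneg f -> 0 <= T ->
  exists M, 0 <= M /\ forall t, 0 <= t <= T -> Rabs (f t) <= M.
Proof.
  intros Hf HT.
  destruct (continuity_ab_maj (fun x => Rabs (f (Rmax 0 x))) 0 T HT) as [m [Hm _]].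
  - intros x Hx. apply (continuity_pt_comp (fun x => f (Rmax 0 x)) Rabs);
      [apply continuity_pt_extend0; [exact Hf | lra] | apply Rcontinuity_abs].
  - exists (Rabs (f (Rmax 0 m))). split; [apply Rabs_pos|]. intros t Ht.
    specialize (Hm t Ht). simpl in Hm. now rewrite Rmax_right in Hm by lra.
Qed.

Lemma mvt_nonneg (f df : R -> R) a b :
  cont_on_nonneg f -> (forall x, 0 < x -> is_derive f x (df x)) -> 0 <= a < b ->
  exists c, a < c < b /\ f b - f a = df c * (b - a).
Proof.
  intros Hf Hd Hab.
  set (g := fun x => f (Rmax 0 x)).
  assert (Dg : forall c, a < c < b -> is_derive g c (df c)).
  { intros x Hx. apply is_derive_ext_loc with f; [|apply Hd; lra].
    exists (mkposreal x ltac:(lra)). intros y Hy. unfold g.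
    change (Rabs (y - x) < x) in Hy. apply Rabs_def2 in Hy.
    now rewrite Rmax_right by lra. }
  destruct (MVT g id a b (fun c Hc => exist _ (df c) (proj1 (is_derive_Reals _ _ _) (Dg c Hc)))
              (fun c _ => derivable_pt_id c)) as [c [Hc Heq]].
  - lra.
  - intros x Hx. apply continuity_pt_extend0; [exact Hf | lra].
  - intros x Hx. apply derivable_continuous_pt, derivable_pt_id.
  - rewrite derive_pt_id in Heq.
    rewrite (derive_pt_eq_0 g c (df c)) in Heq by (apply is_derive_Reals, Dg; exact Hc).
    exists c. split; [exact Hc|]. unfold g, id in Heq. rewrite !Rmax_right in Heq by lra. lra.
Qed.

Lemma nondecreasing_of_deriv_ge0 (f df : R -> R) :
  cont_on_nonneg f -> (forall x, 0 < x -> is_derive f x (df x)) ->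
  (forall x, 0 < x -> 0 <= df x) -> forall a b, 0 <= a <= b -> f a <= f b.
Proof.
  intros Hf Hd Hdf a b Hab.
  destruct (Req_dec a b) as [->|Hne]; [lra|].
  destruct (mvt_nonneg f df a b Hf Hd) as [c [Hc Heq]]; [lra|].
  assert (0 <= df c * (b - a)) by (apply Rmult_le_pos; [apply Hdf|]; lra). lra.
Qed.

Lemma nonincreasing_of_deriv_le0 (f df : R -> R) :
  cont_on_nonneg f -> (forall x, 0 < x -> is_derive f x (df x)) ->
  (forall x, 0 < x -> df x <= 0) -> forall a b, 0 <= a <= b -> f b <= f a.
Proof.
  intros Hf Hd Hdf a b Hab.
  destruct (Req_dec a b) as [->|Hne]; [lra|].
  destruct (mvt_nonneg f df a b Hf Hd) as [c [Hc Heq]]; [lra|].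
  assert (df c * (b - a) <= 0) by (apply Rmult_le_0_r; [apply Hdf|]; lra). lra.
Qed.

Lemma nondecreasing_bounded_is_lim (f : R -> R) B :
  (forall a b, 0 <= a <= b -> f a <= f b) -> (forall t, 0 <= t -> f t <= B) ->
  exists L : R, is_lim f p_infty L /\ L <= B /\ forall t, 0 <= t -> f t <= L.
Proof.
  intros Hmono Hbound.
  set (A := fun y => exists t, 0 <= t /\ y = f t).
  destruct (completeness A) as [L [Hub Hlub]].
  - exists B. intros y [t [Ht ->]]. now apply Hbound.
  - exists (f 0), 0. split; [lra | reflexivity].
  assert (Hle : forall t, 0 <= t -> f t <= L) by (intros t Ht; apply Hub; now exists t).
  exists L. split; [|split; [apply Hlub; intros y [t [Ht ->]]; now apply Hbound | exact Hle]].
  apply is_lim_spec. intros eps.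
  destruct (classic (exists t0, 0 <= t0 /\ L - eps < f t0)) as [[t0 [Ht0 Hft0]]|Hnone].
  - exists t0. intros x Hx.
    assert (f t0 <= f x) by (apply Hmono; lra).
    assert (f x <= L) by (apply Hle; lra).
    simpl. rewrite Rabs_left1 by lra. lra.
  - exfalso. enough (L <= L - eps) by (pose proof (cond_pos eps); lra).
    apply Hlub. intros y [t [Ht ->]].
    destruct (Rle_lt_dec (f t) (L - eps)) as [|Hlt]; [assumption|].
    exfalso. apply Hnone. now exists t.
Qed.

Lemma nonincreasing_nonneg_is_lim (f : R -> R) :
  (forall a b, 0 <= a <= b -> f b <= f a) -> (forall t, 0 <= t -> 0 <= f t) ->
  exists L : R, is_lim f p_infty L /\ 0 <= L.
Proof.
  intros Hmono Hnonneg.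
  destruct (nondecreasing_bounded_is_lim (fun t => - f t) 0) as [L [HL [HL0 _]]].
  - intros a b Hab. pose proof (Hmono a b Hab). lra.
  - intros t Ht. pose proof (Hnonneg t Ht). lra.
  - exists (- L). split; [|lra].
    apply (is_lim_ext (fun t => - - f t)); [intros; ring|].
    exact (is_lim_opp (fun t => - f t) p_infty L HL).
Qed.

Lemma is_lim_squeeze0 (f g : R -> R) :
  (forall t, 0 <= t -> 0 <= f t <= g t) -> is_lim g p_infty 0 -> is_lim f p_infty 0.
Proof.
  intros Hfg Hg.
  apply (is_lim_le_le_loc (fun _ => 0) g); [| apply is_lim_const | exact Hg].
  exists 0. intros t Ht. apply Hfg. lra.
Qed.

(* Otherwise the mean value theorem makes [f] grow linearly. *)
Lemma is_lim_derive_of_bounded (f df : R -> R) (B L : R) :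
  (forall t, 0 < t -> is_derive f t (df t)) -> (forall t, 0 < t -> Rabs (f t) <= B) ->
  is_lim df p_infty L -> L = 0.
Proof.
  intros Hd Hb Hlim.
  destruct (Req_dec L 0) as [|HL]; [assumption|exfalso].
  pose proof (Rabs_pos_lt L HL) as HaL.
  apply is_lim_spec in Hlim.
  destruct (Hlim (mkposreal (Rabs L / 2) ltac:(lra))) as [M HM]. simpl in HM.
  set (t1 := Rmax M 0 + 1).
  assert (M < t1 /\ 0 < t1)
    by (pose proof (Rmax_l M 0); pose proof (Rmax_r M 0); unfold t1; lra).
  assert (HB : 0 <= B) by (pose proof (Hb t1 ltac:(lra)); pose proof (Rabs_pos (f t1)); lra).
  set (t2 := t1 + 4 * B / Rabs L + 1).
  assert (0 <= 4 * B / Rabs L) by (apply Rdiv_le_0_compat; lra).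
  destruct (MVT_gen f t1 t2 df) as [c [Hc Heq]].
  - intros x Hx. rewrite Rmin_left in Hx by (unfold t2; lra). apply Hd. lra.
  - intros x Hx. rewrite Rmin_left in Hx by (unfold t2; lra).
    apply (is_derive_continuity_pt f x (df x)), Hd. lra.
  - rewrite Rmin_left, Rmax_right in Hc by (unfold t2; lra).
    assert (Hdc : Rabs L / 2 < Rabs (df c)).
    { specialize (HM c ltac:(lra)).
      pose proof (Rabs_triang_inv L (df c)). rewrite <- Rabs_Ropp in HM.
      replace (- (df c - L)) with (L - df c) in HM by ring. lra. }
    assert (Hgrowth : Rabs L / 2 * (t2 - t1) = 2 * B + Rabs L / 2) by (unfold t2; field; lra).
    assert (Rabs L / 2 * (t2 - t1) < Rabs (df c) * (t2 - t1))
      by (apply Rmult_lt_compat_r; [unfold t2|]; lra).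
    assert (Hdiff : Rabs (f t2 - f t1) <= 2 * B).
    { pose proof (Rabs_triang (f t2) (- f t1)) as Htri. rewrite Rabs_Ropp in Htri.
      pose proof (Hb t1 ltac:(lra)). pose proof (Hb t2 ltac:(unfold t2; lra)).
      unfold Rminus. lra. }
    rewrite Heq, Rabs_mult, (Rabs_right (t2 - t1)) in Hdiff by (unfold t2; lra). lra.
Qed.

Lemma cont_on_nonneg_plus (f g : R -> R) :
  cont_on_nonneg f -> cont_on_nonneg g -> cont_on_nonneg (fun x => f x + g x).
Proof.
  intros Hf Hg t Ht.
  eapply filterlim_comp_2; [apply Hf, Ht | apply Hg, Ht | apply (filterlim_plus (f t) (g t))].
Qed.

Lemma const_of_deriv0 (f : R -> R) :
  cont_on_nonneg f -> (forall x, 0 < x -> is_derive f x 0) -> forall t, 0 <= t -> f t = f 0.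
Proof.
  intros Hf Hd t Ht.
  pose proof (nondecreasing_of_deriv_ge0 f (fun _ => 0) Hf Hd (fun _ _ => Rle_refl 0) 0 t).
  pose proof (nonincreasing_of_deriv_le0 f (fun _ => 0) Hf Hd (fun _ _ => Rle_refl 0) 0 t).
  lra.
Qed.

Section SEIRV.

Variables (N beta rho sigma gamma : R) (q S E I Rm V : R -> R).
Hypotheses (HN : 0 < N) (Hbeta : 0 <= beta) (Hrho : rho <= 1)
  (Hsigma : 0 < sigma) (Hgamma : 0 < gamma).
Hypothesis Hq : forall t, 0 <= t -> 0 <= q t.
Hypotheses (HS0 : 0 <= S 0) (HE0 : 0 <= E 0) (HI0 : 0 <= I 0) (HR0 : 0 <= Rm 0)
  (HV0 : 0 <= V 0).
Hypothesis Htotal0 : S 0 + E 0 + I 0 + Rm 0 + V 0 = N.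
Hypotheses (CS : cont_on_nonneg S) (CE : cont_on_nonneg E) (CI : cont_on_nonneg I)
  (CR : cont_on_nonneg Rm) (CV : cont_on_nonneg V).
Hypothesis DS : forall t, 0 < t ->
  is_derive S t (- (beta / N) * S t * (1 - rho) * I t - S t / N * q t).
Hypothesis DE : forall t, 0 < t ->
  is_derive E t ((beta / N) * S t * (1 - rho) * I t - sigma * E t).
Hypothesis DI : forall t, 0 < t -> is_derive I t (sigma * E t - gamma * I t).
Hypothesis DR : forall t, 0 < t -> is_derive Rm t (gamma * I t).
Hypothesis DV : forall t, 0 < t -> is_derive V t (S t / N * q t).

Let contact_rate_nonneg : 0 <= beta / N * (1 - rho).
Proof. apply Rmult_le_pos; [apply Rdiv_le_0_compat|]; lra. Qed.

Lemma S_nonneg t : 0 <= t -> 0 <= S t.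
Proof.
  intros Ht.
  destruct (cont_on_nonneg_bounded I t CI Ht) as [MI [HMI0 HMI]].
  assert (HIb : forall s, 0 <= s <= t -> - MI <= I s <= MI)
    by (intros s Hs; apply Rabs_le_between, HMI, Hs).
  set (lam := beta / N * (1 - rho) * MI + 1).
  (* at a crossing [S = -w] the perturbed derivative is
     [w (beta/N (1-rho) I + q/N + lam)], positive because [I >= -MI] *)
  assert (Hbarrier : forall s w, 0 < s <= t -> 0 < w -> S s = - w -> - w <= S s ->
    0 < - (beta / N) * S s * (1 - rho) * I s - S s / N * q s + lam * w).
  { intros s w Hs Hw HSs _. rewrite HSs.
    assert (0 <= beta / N * (1 - rho) * (I s + MI))
      by (apply Rmult_le_pos; [exact contact_rate_nonneg | specialize (HIb s); lra]).
    assert (0 <= q s / N) by (apply Rdiv_le_0_compat; [apply Hq|]; lra).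
    replace (- (beta / N) * - w * (1 - rho) * I s - - w / N * q s + lam * w)
      with (w * (beta / N * (1 - rho) * (I s + MI) + q s / N + 1)) by (unfold lam; field; lra).
    apply Rmult_lt_0_compat; lra. }
  enough (0 <= S t /\ 0 <= S t) by tauto.
  apply (nonneg_barrier S S
           (fun s => - (beta / N) * S s * (1 - rho) * I s - S s / N * q s)
           (fun s => - (beta / N) * S s * (1 - rho) * I s - S s / N * q s) t lam);
    auto; [| lra].
  unfold lam. pose proof (Rmult_le_pos _ _ contact_rate_nonneg HMI0). lra.
Qed.

Lemma EI_nonneg t : 0 <= t -> 0 <= E t /\ 0 <= I t.
Proof.
  intros Ht.
  destruct (cont_on_nonneg_bounded S t CS Ht) as [MS [HMS0 HMS]].
  assert (HSb : forall s, 0 <= s <= t -> - MS <= S s <= MS)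
    by (intros s Hs; apply Rabs_le_between, HMS, Hs).
  set (c := beta / N * (1 - rho)).
  assert (Hc : 0 <= c) by exact contact_rate_nonneg.
  set (lam := c * MS + gamma + sigma + 1).
  apply (nonneg_barrier E I (fun s => beta / N * S s * (1 - rho) * I s - sigma * E s)
           (fun s => sigma * E s - gamma * I s) t lam); auto; [unfold lam; nra | | | lra].
  - intros s w Hs Hw HEs HIs. rewrite HEs.
    assert (0 <= c * S s * (I s + w))
      by (apply Rmult_le_pos; [apply Rmult_le_pos; [|apply S_nonneg]|]; lra).
    assert (0 <= c * (MS - S s) * w)
      by (apply Rmult_le_pos; [apply Rmult_le_pos; [|specialize (HSb s)]|]; lra).
    replace (beta / N * S s * (1 - rho) * I s - sigma * - w + lam * w)
      with (c * S s * (I s + w) + c * (MS - S s) * w + (gamma + 2 * sigma + 1) * w)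
      by (unfold lam, c; field; lra).
    nra.
  - intros s w Hs Hw HIs HEs. rewrite HIs.
    replace (sigma * E s - gamma * - w + lam * w)
      with (sigma * (E s + w) + (c * MS + 2 * gamma + 1) * w) by (unfold lam; ring).
    assert (0 <= sigma * (E s + w)) by (apply Rmult_le_pos; lra).
    assert (0 < (c * MS + 2 * gamma + 1) * w)
      by (apply Rmult_lt_0_compat; [pose proof (Rmult_le_pos _ _ Hc HMS0)|]; lra).
    lra.
Qed.

Lemma total_conserved t : 0 <= t -> S t + E t + I t + Rm t + V t = N.
Proof.
  intros Ht. rewrite <- Htotal0.
  apply (const_of_deriv0 (fun x => S x + E x + I x + Rm x + V x));
    [repeat apply cont_on_nonneg_plus; assumption | | exact Ht].
  intros x Hx.
  replace 0 with ((((- (beta / N) * S x * (1 - rho) * I x - S x / N * q x)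
                    + (beta / N * S x * (1 - rho) * I x - sigma * E x))
                    + (sigma * E x - gamma * I x)) + gamma * I x + S x / N * q x)
    by ring.
  apply (is_derive_plus (fun x => S x + E x + I x + Rm x) V); [|apply DV, Hx].
  apply (is_derive_plus (fun x => S x + E x + I x) Rm); [|apply DR, Hx].
  apply (is_derive_plus (fun x => S x + E x) I); [|apply DI, Hx].
  apply (is_derive_plus S E); [apply DS, Hx | apply DE, Hx].
Qed.

Lemma Rm_nondecreasing a b : 0 <= a <= b -> Rm a <= Rm b.
Proof.
  apply (nondecreasing_of_deriv_ge0 Rm (fun t => gamma * I t) CR DR).
  intros x Hx. apply Rmult_le_pos; [lra | apply EI_nonneg; lra].
Qed.

Lemma V_nondecreasing a b : 0 <= a <= b -> V a <= V b.
Proof.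
  apply (nondecreasing_of_deriv_ge0 V (fun t => S t / N * q t) CV DV).
  intros x Hx. apply Rmult_le_pos; [apply Rdiv_le_0_compat; [apply S_nonneg|]|apply Hq]; lra.
Qed.

Lemma S_nonincreasing a b : 0 <= a <= b -> S b <= S a.
Proof.
  apply (nonincreasing_of_deriv_le0 S _ CS DS).
  intros x Hx.
  pose proof (S_nonneg x ltac:(lra)). pose proof (EI_nonneg x ltac:(lra)).
  assert (0 <= beta / N * (1 - rho) * S x * I x)
    by (apply Rmult_le_pos; [apply Rmult_le_pos; [exact contact_rate_nonneg|]|]; lra).
  assert (0 <= S x / N * q x)
    by (apply Rmult_le_pos; [apply Rdiv_le_0_compat|apply Hq]; lra).
  replace (- (beta / N) * S x * (1 - rho) * I x)
    with (- (beta / N * (1 - rho) * S x * I x)) by ring.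
  lra.
Qed.

Lemma compartments_bounded t :
  0 <= t -> 0 <= I t <= N /\ 0 <= Rm t <= N /\ 0 <= V t <= N.
Proof.
  intros Ht.
  pose proof (total_conserved t Ht). pose proof (S_nonneg t Ht). pose proof (EI_nonneg t Ht).
  pose proof (Rm_nondecreasing 0 t ltac:(lra)). pose proof (V_nondecreasing 0 t ltac:(lra)).
  lra.
Qed.

(* [E + I] is the derivative of the bounded function [I/sigma + (1/sigma + 1/gamma) Rm]. *)
Lemma EI_limit_eq0 (L : R) : is_lim (fun t => E t + I t) p_infty L -> L = 0.
Proof.
  set (k := (gamma + sigma) / (sigma * gamma)).
  assert (Hk : 0 < k) by (apply Rdiv_lt_0_compat; nra).
  apply (is_lim_derive_of_bounded (fun t => / sigma * I t + k * Rm t) _ (/ sigma * N + k * N)).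
  - intros x Hx.
    replace (E x + I x) with (/ sigma * (sigma * E x - gamma * I x) + k * (gamma * I x))
      by (unfold k; field; lra).
    apply (is_derive_plus (V := R_NormedModule)); apply is_derive_scal; auto.
  - intros x Hx. destruct (compartments_bounded x ltac:(lra)) as [HIx [HRx _]].
    assert (0 < / sigma) by (apply Rinv_0_lt_compat; lra).
    rewrite Rabs_right by (apply Rle_ge, Rplus_le_le_0_compat; apply Rmult_le_pos; lra).
    apply Rplus_le_compat; apply Rmult_le_compat_l; lra.
Qed.

Lemma seirv_converges :
  exists Sinf Vinf : R,
    0 <= Sinf /\ 0 <= Vinf /\ Sinf + Vinf <= N /\
    is_lim S p_infty Sinf /\ is_lim E p_infty 0 /\ is_lim I p_infty 0 /\
    is_lim Rm p_infty (N - Sinf - Vinf) /\ is_lim V p_infty Vinf.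
Proof.
  destruct (nondecreasing_bounded_is_lim Rm N Rm_nondecreasing
              (fun t Ht => proj2 (proj1 (proj2 (compartments_bounded t Ht)))))
    as [Rinf [LR [_ HRinf]]].
  destruct (nondecreasing_bounded_is_lim V N V_nondecreasing
              (fun t Ht => proj2 (proj2 (proj2 (compartments_bounded t Ht)))))
    as [Vinf [LV [_ HVinf]]].
  destruct (nonincreasing_nonneg_is_lim S S_nonincreasing S_nonneg) as [Sinf [LS HSinf]].
  assert (LEI : is_lim (fun t => E t + I t) p_infty (N - Sinf - Rinf - Vinf)).
  { apply (is_lim_ext_loc (fun t => N - S t - Rm t - V t)).
    - exists 0. intros t Ht. pose proof (total_conserved t ltac:(lra)). lra.
    - apply is_lim_minus'; [apply is_lim_minus'; [apply is_lim_minus'|]|];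
        [apply is_lim_const | assumption ..]. }
  pose proof (EI_limit_eq0 _ LEI) as HL. rewrite HL in LEI.
  pose proof (HRinf 0 (Rle_refl 0)). pose proof (HVinf 0 (Rle_refl 0)).
  exists Sinf, Vinf.
  split; [lra|]. split; [lra|]. split; [lra|].
  split; [exact LS|]. split; [|split; [|split]].
  - apply (is_lim_squeeze0 E (fun t => E t + I t)); [|exact LEI].
    intros t Ht. pose proof (EI_nonneg t Ht). lra.
  - apply (is_lim_squeeze0 I (fun t => E t + I t)); [|exact LEI].
    intros t Ht. pose proof (EI_nonneg t Ht). lra.
  - replace (N - Sinf - Vinf) with Rinf by lra. exact LR.
  - exact LV.
Qed.

End SEIRV.

Theorem mainTheorem2
  (N beta rho sigma gamma pi1 pi2 : R) (D1 D2 : R -> R)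
  (S E I Rm V : R -> R) (S0 E0 I0 R0 V0 : R) :
  0 < N -> 0 < beta -> 0 < rho -> rho < 1 -> 0 < sigma -> 0 < gamma ->
  0 <= pi1 -> pi1 <= pi2 -> pi2 <= 1 ->
  cont_on_nonneg D1 -> cont_on_nonneg D2 ->
  (forall t, 0 <= t -> 0 <= D1 t) -> (forall t, 0 <= t -> 0 <= D2 t) ->
  is_lim D1 p_infty 0 -> is_lim D2 p_infty 0 ->
  0 <= S0 -> 0 <= E0 -> 0 <= I0 -> 0 <= R0 -> 0 <= V0 ->
  S0 + E0 + I0 + R0 + V0 = N ->
  S 0 = S0 -> E 0 = E0 -> I 0 = I0 -> Rm 0 = R0 -> V 0 = V0 ->
  cont_on_nonneg S -> cont_on_nonneg E -> cont_on_nonneg I ->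
  cont_on_nonneg Rm -> cont_on_nonneg V ->
  (forall t, 0 < t ->
     is_derive S t (- (beta / N) * S t * (1 - rho) * I t
                    - S t / N * vacc_rate D1 D2 pi1 pi2 t)) ->
  (forall t, 0 < t ->
     is_derive E t ((beta / N) * S t * (1 - rho) * I t - sigma * E t)) ->
  (forall t, 0 < t -> is_derive I t (sigma * E t - gamma * I t)) ->
  (forall t, 0 < t -> is_derive Rm t (gamma * I t)) ->
  (forall t, 0 < t -> is_derive V t (S t / N * vacc_rate D1 D2 pi1 pi2 t)) ->
  exists Sinf Vinf : R,
    0 <= Sinf /\ 0 <= Vinf /\ Sinf + Vinf <= N /\
    is_lim S p_infty Sinf /\ is_lim E p_infty 0 /\ is_lim I p_infty 0 /\
    is_lim Rm p_infty (N - Sinf - Vinf) /\ is_lim V p_infty Vinf.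
Proof.
  intros HN Hbeta _ Hrho Hsigma Hgamma Hpi1 Hpi12 Hpi2 _ _ HD1 HD2 _ _
    HS0 HE0 HI0 HR0 HV0 Htotal0 ES EE EI ER EV CS CE CI CR CV DS DE DI DR DV.
  subst S0 E0 I0 R0 V0.
  assert (Hq : forall t, 0 <= t -> 0 <= vacc_rate D1 D2 pi1 pi2 t).
  { intros t Ht. unfold vacc_rate. pose proof (HD1 t Ht). pose proof (HD2 t Ht). nra. }
  apply (seirv_converges N beta rho sigma gamma (vacc_rate D1 D2 pi1 pi2));
    assumption || lra.
Qed.
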